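(* Let $r\ge2$ and for $1\le j\le r$ let $(\alpha^{[j]}_h)_{h\in\mathbb{N}}$ and $(\tilde\alpha^{[j]}_h)_{h\in\mathbb{N}}$ be sequences of positive reals with $\alpha^{[j]}_h=1/\tilde\alpha^{[j]}_h$ for all $h\ge1$. Let $\mathbf{X}_{\mathbf{n},[\mathbf{A},I]}$ be the vector of numbers of remaining balls of types $1,\dots,r-1$ in the $r$-type urn model I with weights $\alpha^{[j]}$, and $\mathbf{X}_{\mathbf{n},[\tilde{\mathbf{A}},II]}$ the corresponding vector in the $r$-type urn model II with weights $\tilde\alpha^{[j]}$, both started from $\mathbf{n}=(n_1,\dots,n_r)$. Then for all $\mathbf{n}$ and $\mathbf{k}$, \[ \mathbb{P}\{\mathbf{X}_{\mathbf{n},[\mathbf{A},I]}=\mathbf{k}\}=\mathbb{P}\{\mathbf{X}_{\mathbf{n},[\tilde{\mathbf{A}},II]}=\mathbf{k}\}. \]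
   Context: Both models have balls of types $1,\dots,r$, and in both the drawn ball is discarded and the process stops when either all type $r$ balls or all balls of types $1,\dots,r-1$ have been drawn; the vector records the numbers of type $1,\dots,r-1$ balls at that time. Model I: with $n'_j$ balls of type $j$ present, type $\ell$ is drawn with probability $\alpha^{[\ell]}_{n'_\ell}/\sum_{j=1}^r\alpha^{[j]}_{n'_j}$, where $\alpha^{[j]}_0=0$. Model II: type $\ell$ is drawn with probability $\frac{(1-\delta_{n'_\ell,0})\prod_{j\neq\ell}(\tilde\alpha^{[j]}_{n'_j})^{1-\delta_{n'_j,0}}}{\sum_{h=1}^{r}(1-\delta_{n'_h,0})\prod_{j\neq h}(\tilde\alpha^{[j]}_{n'_j})^{1-\delta_{n'_j,0}}}$, with $\delta$ the Kronecker delta. *)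

From HB Require Import structures.
From mathcomp Require Import all_boot all_order all_algebra.
Set Implicit Arguments. Unset Strict Implicit. Unset Printing Implicit Defensive.
Import Order.TTheory GRing.Theory Num.Theory.
Local Open Scope ring_scope.

(* Ball types are indexed by 'I_r; the paper's type j (1 <= j <= r) is the
   ordinal j-1, so the distinguished type r is the ordinal of value r.-1.
   A urn state is the vector of remaining ball numbers of each type. *)
Definition state (r : nat) := {ffun 'I_r -> nat}.

Definition is_last_type (r : nat) (j : 'I_r) : bool := (val j == r.-1)%N.

Definition stopped (r : nat) (s : state r) : bool :=
  [forall j : 'I_r, is_last_type j ==> (s j == 0%N)] ||
  [forall j : 'I_r, ~~ is_last_type j ==> (s j == 0%N)].

Definition restrict (r : nat) (s : state r) : {ffun 'I_r.-1 -> nat} :=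
  [ffun i : 'I_r.-1 => s (widen_ord (leq_pred r) i)].

Definition draw (r : nat) (s : state r) (l : 'I_r) : state r :=
  [ffun j => if j == l then (s j).-1 else s j].

Definition alphaI (R : realFieldType) (r : nat) (alpha : 'I_r -> nat -> R)
  (s : state r) (j : 'I_r) : R :=
  if s j == 0%N then 0 else alpha j (s j).

Definition wI (R : realFieldType) (r : nat) (alpha : 'I_r -> nat -> R)
  (s : state r) (l : 'I_r) : R :=
  alphaI alpha s l / \sum_(j : 'I_r) alphaI alpha s j.

Definition numII (R : realFieldType) (r : nat) (talpha : 'I_r -> nat -> R)
  (s : state r) (h : 'I_r) : R :=
  (if s h == 0%N then 0 else 1) *
  \prod_(j : 'I_r | j != h) (if s j == 0%N then 1 else talpha j (s j)).

Definition wII (R : realFieldType) (r : nat) (talpha : 'I_r -> nat -> R)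
  (s : state r) (l : 'I_r) : R :=
  numII talpha s l / \sum_(h : 'I_r) numII talpha s h.

Fixpoint stop_prob (R : realFieldType) (r : nat) (w : state r -> 'I_r -> R)
  (fuel : nat) (s : state r) (k : {ffun 'I_r.-1 -> nat}) : R :=
  if stopped s then (if restrict s == k then 1 else 0)
  else match fuel with
       | 0%N => 0
       | fuel'.+1 => \sum_(l : 'I_r) w s l * stop_prob w fuel' (draw s l) k
       end.

(* P{X_n = k}: fuel = total number of balls suffices, since every draw with
   positive probability removes one ball. *)
Definition urn_prob (R : realFieldType) (r : nat) (w : state r -> 'I_r -> R)
  (n : state r) (k : {ffun 'I_r.-1 -> nat}) : R :=
  stop_prob w (\sum_(j : 'I_r) n j)%N n k.

Definition probI (R : realFieldType) (r : nat) (alpha : 'I_r -> nat -> R) :=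
  urn_prob (wI alpha).
Definition probII (R : realFieldType) (r : nat) (talpha : 'I_r -> nat -> R) :=
  urn_prob (wII talpha).

From HB Require Import structures.
From mathcomp Require Import all_boot all_order all_algebra.
Import Order.TTheory GRing.Theory Num.Theory.
Local Open Scope ring_scope.

(* Since alpha = 1/talpha on nonempty types, Model II's numerator for type h is
   Model I's weight of h times the common factor prod_{j nonempty} talpha_j(n'_j).
   Normalisation cancels that factor, so both urns have the same transition
   probabilities in every state, hence the same law of the stopping vector. *)

Lemma normalize_scale (R : fieldType) (I : finType) (a : I -> R) (c : R) (i : I) :
  c != 0 -> (a i * c) / \sum_j (a j * c) = a i / \sum_j a j.
Proof. by move=> c0; rewrite -mulr_suml invfM mulrACA mulfV // mulr1. Qed.

Lemma eq_stop_prob (R : realFieldType) (r : nat) (w1 w2 : state r -> 'I_r -> R)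
  (fuel : nat) (s : state r) (k : {ffun 'I_r.-1 -> nat}) :
  w1 =2 w2 -> stop_prob w1 fuel s k = stop_prob w2 fuel s k.
Proof.
move=> w12; elim: fuel s => [|fuel IH] s //=.
by case: ifP => // _; apply: eq_bigr => l _; rewrite w12 IH.
Qed.

Section ModelWeights.

Variables (R : realFieldType) (r : nat) (alpha talpha : 'I_r -> nat -> R).
Hypothesis htalpha : forall j h, 0 < talpha j h.
Hypothesis hrel : forall j h, (1 <= h)%N -> alpha j h = (talpha j h)^-1.

Definition talpha_prod (s : state r) : R :=
  \prod_(j : 'I_r) (if s j == 0%N then 1 else talpha j (s j)).

Lemma talpha_prod_neq0 (s : state r) : talpha_prod s != 0.
Proof.
rewrite prodf_seq_neq0; apply/allP => j _ /=.
by case: ifP => _; [exact: oner_neq0 | rewrite gt_eqF].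
Qed.

Lemma numII_alphaI (s : state r) (h : 'I_r) :
  numII talpha s h = alphaI alpha s h * talpha_prod s.
Proof.
rewrite /numII /alphaI /talpha_prod [in RHS](bigD1 h) //=.
case hz: (s h == 0%N); first by rewrite !mul0r.
by rewrite hrel ?lt0n ?hz // mul1r mulrA mulVf ?mul1r ?gt_eqF.
Qed.

Lemma wII_wI : wII talpha =2 wI alpha.
Proof.
move=> s l; rewrite /wII /wI numII_alphaI.
under eq_bigr => h _ do rewrite numII_alphaI.
exact/normalize_scale/talpha_prod_neq0.
Qed.

End ModelWeights.

Theorem theorem6 (R : realFieldType) (r : nat) (hr : (2 <= r)%N)
  (alpha talpha : 'I_r -> nat -> R)
  (halpha : forall j h, 0 < alpha j h)
  (htalpha : forall j h, 0 < talpha j h)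
  (hrel : forall j h, (1 <= h)%N -> alpha j h = (talpha j h)^-1)
  (n : state r) (k : {ffun 'I_r.-1 -> nat}) :
  probI alpha n k = probII talpha n k.
Proof.
apply: eq_stop_prob => s l.
by rewrite (@wII_wI _ _ alpha talpha htalpha hrel).
Qed.
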